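(* For any simply laced Dynkin diagram with $r$ vertices (not necessarily connected), every multipath in it has total length at most $r(r+1)/2$, and equality can occur only if the diagram is of type $A_r$.
   Context: A simple path in a Dynkin diagram is a sequence of distinct vertices, consecutive ones joined by an edge; its length is the number of its vertices. Given distinct vertices $i_1,\ldots,i_k$ and positive integers $m_1,\ldots,m_k$, a multipath with beginnings $i_1,\ldots,i_k$ and lengths $m_1,\ldots,m_k$ is a sequence of simple paths $(j_{p,1},\ldots,j_{p,m_p})$, $p=1,\ldots,k$, with $j_{p,1}=i_p$, such that for $p<p'$ the vertex $i_p$ does not occur in $(j_{p',1},\ldots,j_{p',m_{p'}})$. Its total length is $m_1+\cdots+m_k$. *)

From mathcomp Require Import all_boot all_fingroup.
Set Implicit Arguments. Unset Strict Implicit. Unset Printing Implicit Defensive.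

Inductive dtype := TA of nat | TD of nat | TE of nat.

Definition dvalid (t : dtype) : bool :=
  match t with TA n => 0 < n | TD n => 3 < n | TE n => 5 < n <= 8 end.

Definition dsize (t : dtype) : nat :=
  match t with TA n | TD n | TE n => n end.

Definition chain (n u v : nat) : bool :=
  [&& u < n, v < n & (u.+1 == v) || (v.+1 == u)].

Definition sedge (a b u v : nat) : bool :=
  ((u == a) && (v == b)) || ((u == b) && (v == a)).

(** Standard labelling of the connected diagrams, vertices {0,...,n-1}:
    A_n : the chain 0 - ... - (n-1);
    D_n : the chain 0 - ... - (n-2) plus the edge (n-3) - (n-1);
    E_n : the chain 0 - ... - (n-2) plus the edge 2 - (n-1). *)
Definition dedge (t : dtype) (u v : nat) : bool :=
  match t with
  | TA n => chain n u v
  | TD n => chain n.-1 u v || sedge (n - 3) (n - 1) u v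
  | TE n => chain n.-1 u v || sedge 2 (n - 1) u v
  end.

(** Disjoint union of a list of connected diagrams, vertices numbered
    consecutively, component after component. *)
Fixpoint ledge (ts : seq dtype) (u v : nat) : bool :=
  match ts with
  | [::] => false
  | t :: ts' =>
      if (u < dsize t) && (v < dsize t) then dedge t u v
      else if (dsize t <= u) && (dsize t <= v)
           then ledge ts' (u - dsize t) (v - dsize t)
           else false
  end.

Definition is_sl_dynkin (r : nat) (e : rel 'I_r) : Prop :=
  exists ts : seq dtype,
    all dvalid ts /\ sumn (map dsize ts) = r /\
    exists s : {perm 'I_r}, forall x y : 'I_r, e x y = ledge ts (s x) (s y).

Definition is_type_A (r : nat) (e : rel 'I_r) : Prop :=
  exists s : {perm 'I_r}, forall x y : 'I_r, e x y = dedge (TA r) (s x) (s y).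

(** A simple path is stored as (i, rest), standing for the sequence
    i :: rest (so it is nonempty and begins at i). *)
Definition simple_path (T : eqType) (e : rel T) (p : T * seq T) : bool :=
  uniq (p.1 :: p.2) && path e p.1 p.2.

Definition is_multipath (T : eqType) (e : rel T) (ps : seq (T * seq T)) : Prop :=
  all (simple_path e) ps /\ uniq (map fst ps) /\
  forall (x0 : T * seq T) (p q : nat), p < q < size ps ->
    (nth x0 ps p).1 \notin ((nth x0 ps q).1 :: (nth x0 ps q).2).

Definition total_length (T : Type) (ps : seq (T * seq T)) : nat :=
  sumn [seq (size p.2).+1 | p <- ps].

(* The p-th path of a multipath avoids the p - 1 beginnings before it, so it has
   at most r - p + 1 vertices, and the total length is at most
   r + (r - 1) + ... + 1 = C(r + 1, 2).  Equality forces the first path to visit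
   all r vertices.  A Hamiltonian path stays inside one connected component, so
   the diagram is connected, and it passes through at most two vertices of
   degree one, whereas D_n and E_n have three; hence the diagram is A_r. *)
From mathcomp Require Import all_boot all_fingroup.
From mathcomp Require Import zify.
Set Implicit Arguments. Unset Strict Implicit. Unset Printing Implicit Defensive.

Section MultipathLength.

Variable T : finType.

Definition lies_in (D : {set T}) (ps : seq (T * seq T)) : bool :=
  all (fun p => all (mem D) (p.1 :: p.2)) ps.

Lemma uniq_size_le_card (D : {set T}) (s : seq T) :
  uniq s -> all (mem D) s -> size s <= #|D|.
Proof.
move=> s_uniq /allP sD; rewrite -(card_uniqP s_uniq).
by apply/subset_leq_card/subsetP.
Qed.

Lemma lies_in_behead (D : {set T}) a ps :
  all (fun q => a.1 \notin q.1 :: q.2) ps ->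
  lies_in D (a :: ps) -> lies_in (D :\ a.1) ps.
Proof.
move=> /allP a_avoided /andP [_ /allP psD].
apply/allP => q q_ps; apply/allP => x xq; rewrite !inE.
have -> : x != a.1 by apply: contraNneq (a_avoided q q_ps) => <-.
exact: (allP (psD q q_ps)).
Qed.

Lemma card_setD1_head (D : {set T}) a ps :
  lies_in D (a :: ps) -> #|D| = #|D :\ a.1|.+1.
Proof. by rewrite /lies_in /= => /andP [/andP [aD _] _]; rewrite (cardsD1 a.1) aD. Qed.

Lemma multipath_length_le (D : {set T}) ps :
  all (fun p => uniq (p.1 :: p.2)) ps ->
  pairwise (fun p q => p.1 \notin q.1 :: q.2) ps -> lies_in D ps ->
  total_length ps <= 'C(#|D|.+1, 2).
Proof.
elim: ps D => [//|a ps IH] D /andP [a_uniq ps_uniq].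
rewrite pairwise_cons => /andP [a_avoided ps_avoid] psD.
have tail_le := IH _ ps_uniq ps_avoid (lies_in_behead a_avoided psD).
have head_le : size (a.1 :: a.2) <= #|D|.
  by apply: uniq_size_le_card; case/andP: psD.
rewrite (card_setD1_head psD) in head_le *.
by rewrite binS bin1 addnC leq_add.
Qed.

Lemma multipath_length_eq_head (D : {set T}) a ps :
  all (fun p => uniq (p.1 :: p.2)) (a :: ps) ->
  pairwise (fun p q => p.1 \notin q.1 :: q.2) (a :: ps) -> lies_in D (a :: ps) ->
  total_length (a :: ps) = 'C(#|D|.+1, 2) -> size (a.1 :: a.2) = #|D|.
Proof.
move=> /andP [a_uniq ps_uniq]; rewrite pairwise_cons => /andP [a_avoided ps_avoid] psD.
have tail_le := multipath_length_le ps_uniq ps_avoid (lies_in_behead a_avoided psD).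
have head_le : size (a.1 :: a.2) <= #|D|.
  by apply: uniq_size_le_card; case/andP: psD.
rewrite (card_setD1_head psD) binS bin1 /total_length /= in head_le *.
rewrite -/(total_length ps); move: tail_le head_le.
set c := 'C(_, 2); lia.
Qed.

End MultipathLength.

Section PathLeaves.

Variables (T : eqType) (R : rel T).

Lemma path_invariant (U : Type) (f : T -> U) x l :
  (forall y z, R y z -> f y = f z) -> path R x l -> {in x :: l, forall y, f y = f x}.
Proof.
move=> f_R; elim: l x => [|z l IH] x /=; first by move=> _ y /[!inE] /eqP ->.
case/andP => Rxz zl y /[!inE] /orP [/eqP -> // | yl].
by rewrite (f_R _ _ Rxz); apply: IH.
Qed.

(* For a symmetric [R], [v] has at most one neighbour. *)
Definition is_leaf (v : T) : Prop := forall y z, R y v -> R v z -> y = z.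

Lemma leaf_path_end x l v :
  uniq (x :: l) -> path R x l -> v \in x :: l -> is_leaf v -> v \in [:: x; last x l].
Proof.
move=> xl_uniq xl_path /[!inE] /orP [-> // | vl] v_leaf.
case/splitPr: vl xl_uniq xl_path => l1 [|z l2] xl_uniq.
  by rewrite last_cat eqxx orbT.
rewrite cat_path => /andP [_] /= /and3P [Ryv Rvz _].
move: xl_uniq; rewrite -cat_cons cat_uniq => /and3P [_ /hasPn l2_fresh _].
have z_l1 : z \in x :: l1 by rewrite -(v_leaf _ _ Ryv Rvz) mem_last.
by move: (l2_fresh z); rewrite z_l1 !inE eqxx orbT => /(_ isT).
Qed.

Lemma path_leaves_le2 x l vs :
  uniq (x :: l) -> path R x l -> uniq vs -> {subset vs <= x :: l} ->
  {in vs, forall v, is_leaf v} -> size vs <= 2.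
Proof.
move=> xl_uniq xl_path vs_uniq vs_xl vs_leaf.
apply: (uniq_leq_size (s2 := [:: x; last x l])) => // v v_vs.
exact: leaf_path_end (vs_xl v v_vs) (vs_leaf v v_vs).
Qed.

End PathLeaves.

Lemma hamiltonian_not_three_leaves (R : rel nat) n x l :
  perm_eq (x :: l) (iota 0 n) -> path R x l -> 2 < n ->
  ~ {in [:: 0; n - 2; n - 1], forall v, is_leaf R v}.
Proof.
move=> xl_perm xl_path n_gt2 leaves.
have xl_uniq : uniq (x :: l) by rewrite (perm_uniq xl_perm) iota_uniq.
suff : size [:: 0; n - 2; n - 1] <= 2 by [].
apply: path_leaves_le2 xl_uniq xl_path _ _ leaves; first by rewrite /= !inE; lia.
by move=> v; rewrite (perm_mem xl_perm) mem_iota !inE; lia.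
Qed.

Lemma dedgeD_leaves n :
  3 < n -> {in [:: 0; n - 2; n - 1], forall v, is_leaf (dedge (TD n)) v}.
Proof. by move=> n_gt3 v /[!inE] /or3P [] /eqP -> y z; rewrite /= /chain /sedge; lia. Qed.

Lemma dedgeE_leaves n :
  5 < n -> {in [:: 0; n - 2; n - 1], forall v, is_leaf (dedge (TE n)) v}.
Proof. by move=> n_gt5 v /[!inE] /or3P [] /eqP -> y z; rewrite /= /chain /sedge; lia. Qed.

Lemma dvalid_gt0 t : dvalid t -> 0 < dsize t.
Proof. by case: t => n /=; lia. Qed.

Lemma ledge_cons_same_side t ts u v :
  ledge (t :: ts) u v -> (u < dsize t) = (v < dsize t).
Proof.
rewrite /=; case: ifP => [/andP [-> ->] // | _].
by case: ifP => // /andP [u_ge v_ge] _; rewrite !ltnNge u_ge v_ge.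
Qed.

Lemma ledge1 t u v : ledge [:: t] u v -> dedge t u v.
Proof. by rewrite /=; case: ifP => // _; case: ifP. Qed.

Lemma hamiltonian_ledge ts r x l :
  all dvalid ts -> sumn (map dsize ts) = r ->
  perm_eq (x :: l) (iota 0 r) -> path (ledge ts) x l -> ts = [:: TA r].
Proof.
move=> ts_valid ts_sum xl_perm xl_path.
have xl_mem v : (v \in x :: l) = (v < r) by rewrite (perm_mem xl_perm) mem_iota.
have x_lt_r : x < r by rewrite -xl_mem mem_head.
case: ts ts_valid ts_sum xl_path => [|t ts] /=; first lia.
case/andP => t_valid ts_valid ts_sum xl_path.
have same_side := path_invariant (@ledge_cons_same_side t ts) xl_path.
have first_in : 0 \in x :: l by rewrite xl_mem; lia.
have last_in : r.-1 \in x :: l by rewrite xl_mem; lia.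
have last_t : r.-1 < dsize t by rewrite same_side // -(same_side 0) // dvalid_gt0.
have ts0 : ts = [::].
  case: ts ts_valid ts_sum {xl_path same_side} => [//|t' ts] /= /andP [/dvalid_gt0].
  lia.
subst ts; move: ts_sum; rewrite /= addn0 => t_size.
have {}xl_path := sub_path (@ledge1 t) xl_path.
case: t t_valid t_size xl_path {same_side last_t} => n /= n_valid n_r xl_path;
  subst r => //.
- by case: (hamiltonian_not_three_leaves xl_perm xl_path _ (dedgeD_leaves n_valid)); lia.
- case/andP: n_valid => n_gt5 _.
  by case: (hamiltonian_not_three_leaves xl_perm xl_path _ (dedgeE_leaves n_gt5)); lia.
Qed.

Lemma perm_eq_iota_map r (f : 'I_r -> nat) (w : seq 'I_r) :
  injective f -> (forall y, f y < r) -> uniq w -> size w = r ->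
  perm_eq (map f w) (iota 0 r).
Proof.
move=> f_inj f_lt w_uniq w_size.
have fw_uniq : uniq (map f w) by rewrite map_inj_uniq.
apply: uniq_perm fw_uniq (iota_uniq 0 r) (uniq_min_size fw_uniq _ _).2.
- by move=> v /mapP [y _ ->]; rewrite mem_iota f_lt.
- by rewrite size_map size_iota w_size.
Qed.

Lemma sl_dynkin_hamiltonian_type_A r (e : rel 'I_r) x l :
  is_sl_dynkin e -> uniq (x :: l) -> size (x :: l) = r -> path e x l -> is_type_A e.
Proof.
case=> ts [ts_valid [ts_sum [s e_s]]] xl_uniq xl_size xl_path.
pose f (y : 'I_r) := val (s y).
have f_inj : injective f by move=> y z /val_inj /perm_inj.
have fxl_perm := perm_eq_iota_map f_inj (fun y => ltn_ord (s y)) xl_uniq xl_size.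
have fxl_path : path (ledge ts) (f x) (map f l) by rewrite path_map -(eq_path e_s).
have ts_A := hamiltonian_ledge ts_valid ts_sum fxl_perm fxl_path.
by exists s => y z; rewrite e_s ts_A /= !ltn_ord.
Qed.

Lemma type_A_ord0 (e : rel 'I_0) : is_type_A e.
Proof. by exists 1%g => -[]. Qed.

Lemma multipath_heads_avoided (T : eqType) (e : rel T) ps :
  is_multipath e ps -> pairwise (fun p q => p.1 \notin q.1 :: q.2) ps.
Proof.
case: ps => [//|a ps] [_ [_ heads]]; apply/(pairwiseP a) => i j _ j_lt ij.
by apply: heads; rewrite ij.
Qed.

Theorem mainTheorem6 (r : nat) (e : rel 'I_r) (He : is_sl_dynkin e)
  (ps : seq ('I_r * seq 'I_r)) (Hps : is_multipath e ps) :
  total_length ps <= r * r.+1 %/ 2 /\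
  (total_length ps = r * r.+1 %/ 2 -> is_type_A e).
Proof.
have ps_avoid := multipath_heads_avoided Hps.
case: Hps => ps_simple _.
have ps_uniq : all (fun p => uniq (p.1 :: p.2)) ps.
  by apply: sub_all ps_simple => p /andP [].
have ps_in : lies_in [set: 'I_r] ps.
  by apply/allP => p _; apply/allP => x _; rewrite inE.
have card_T : #|[set: 'I_r]| = r by rewrite cardsT card_ord.
have -> : r * r.+1 %/ 2 = 'C(#|[set: 'I_r]|.+1, 2) by rewrite card_T bin2 divn2 mulnC.
split; first exact: multipath_length_le.
case: ps ps_simple ps_avoid ps_uniq ps_in => [|a ps] ps_simple ps_avoid ps_uniq ps_in.
  rewrite card_T /total_length /= => /esym /eqP; rewrite -leqn0 leqNgt bin_gt0.
  case: r e He {ps_simple ps_avoid ps_uniq ps_in card_T} => [e _ _|//].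
  exact: type_A_ord0.
move=> /(multipath_length_eq_head ps_uniq ps_avoid ps_in); rewrite card_T => a_size.
case/andP: ps_simple => /andP [a_uniq a_path] _.
exact: sl_dynkin_hamiltonian_type_A He a_uniq a_size a_path.
Qed.
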